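(* Let $\alpha,\beta\in(0,1)$, $m=\alpha n^\beta$, $c\ge2$, and $\lambda^*=1/(1-\beta)$. Then for all $\lambda<\lambda^*$ there exists $N>0$ such that for all $n>N$, $\frac{\lambda m}{\log_2 n}\le w^*(n,2^{m+c})$.
   Context: For $q\ge1$, $w^*(n,q)=\max\{w\ge0:\sum_{j=1}^w\binom{n}{j}\le q-1\}$. *)

From Stdlib Require Import Reals List.
Open Scope R_scope.

Definition binsum (n w : nat) : R :=
  fold_right Rplus 0 (map (fun j => Binomial.C n j) (seq 1 w)).

Fixpoint wmax (n : nat) (q : R) (k : nat) : nat :=
  match k with
  | O => O
  | S k' => if Rle_dec (binsum n (S k')) (q - 1) then S k' else wmax n q k'
  end.

(* w*(n,q) = max{ w >= 0 : sum_{j=1}^w C(n,j) <= q - 1 }.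
   Since C(n,j) = 0 for j > n, the maximum may be taken over w <= n
   (it coincides with the paper's max whenever that max exists, i.e. q < 2^n). *)
Definition wstar (n : nat) (q : R) : nat := wmax n q n.

Definition log2 (x : R) : R := ln x / ln 2.

(* Put K := λm / log2 n and k := ⌈K⌉.  Bounding C(n,j) by n^j/j! and k! below by (k/3)^k gives
   sum_{j=1}^k C(n,j) <= (6n/k)^k, whose logarithm is
   K ((1-β) ln n + O(ln ln n)) = λ(1-β) m ln 2 + o(m) <= m ln 2
   as soon as λ(1-β) < 1.  Hence k <= w*(n, 2^(m+c)). *)

From Stdlib Require Import Reals Lra Lia List ZArith.
From Coquelicot Require Import Coquelicot.
Open Scope R_scope.

Lemma fold_right_Rplus_shift (l : list R) (a : R) :
  fold_right Rplus a l = fold_right Rplus 0 l + a.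
Proof. induction l; simpl; lra. Qed.

Lemma binsum_S n k : binsum n (S k) = binsum n k + Binomial.C n (S k).
Proof.
  unfold binsum. rewrite seq_S, map_app, fold_right_app; simpl.
  rewrite fold_right_Rplus_shift. lra.
Qed.

Lemma le_wmax n q K k : (k <= K)%nat -> binsum n k <= q - 1 -> (k <= wmax n q K)%nat.
Proof.
  induction K as [|K IHK]; intros Hk Hb; simpl; [lia|].
  destruct (Rle_dec (binsum n (S K)) (q - 1)) as [_|HK]; [lia|].
  destruct (Nat.eq_dec k (S K)) as [->|Hne]; [contradiction|].
  apply IHK; [lia|exact Hb].
Qed.

Lemma fact_le_pow_mul_fact n j : (j <= n)%nat ->
  INR (fact n) <= INR n ^ j * INR (fact (n - j)).
Proof.
  induction j as [|j IHj]; intros Hj.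
  - rewrite Nat.sub_0_r. simpl. lra.
  - replace (n - j)%nat with (S (n - S j)) in IHj by lia.
    change (fact (S (n - S j))) with (S (n - S j) * fact (n - S j))%nat in IHj.
    rewrite mult_INR in IHj.
    assert (Hle : INR (S (n - S j)) <= INR n) by (apply le_INR; lia).
    assert (Hf := INR_fact_lt_0 (n - S j)).
    assert (Hp : 0 <= INR n ^ j) by (apply pow_le, pos_INR).
    assert (Hstep : INR (S (n - S j)) * INR (fact (n - S j)) <= INR n * INR (fact (n - S j)))
      by (apply Rmult_le_compat_r; lra).
    specialize (IHj ltac:(lia)). simpl.
    apply Rmult_le_compat_l with (r := INR n ^ j) in Hstep; [nra|exact Hp].
Qed.

Lemma C_le_pow_div_fact n j : (j <= n)%nat -> Binomial.C n j <= INR n ^ j / INR (fact j).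
Proof.
  intros Hj. unfold Binomial.C.
  assert (H := fact_le_pow_mul_fact n j Hj).
  assert (Fj := INR_fact_lt_0 j). assert (Fnj := INR_fact_lt_0 (n - j)).
  apply Rmult_le_reg_r with (INR (fact j) * INR (fact (n - j))); [nra|].
  field_simplify; lra.
Qed.

Lemma pow_div_fact_le_succ n j : (S j <= n)%nat ->
  INR n ^ j / INR (fact j) <= INR n ^ S j / INR (fact (S j)).
Proof.
  intros Hj.
  change (fact (S j)) with (S j * fact j)%nat. rewrite mult_INR, <- tech_pow_Rmult.
  assert (Fj := INR_fact_lt_0 j).
  assert (Hle : INR (S j) <= INR n) by (apply le_INR; lia).
  assert (Hj0 : 0 < INR (S j)) by (apply lt_0_INR; lia).
  assert (Hp : 0 <= INR n ^ j / INR (fact j)).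
  { apply Rdiv_le_0_compat; [apply pow_le, pos_INR|lra]. }
  replace (INR n * INR n ^ j / (INR (S j) * INR (fact j)))
    with (INR n ^ j / INR (fact j) * (INR n / INR (S j))) by (field; lra).
  assert (1 <= INR n / INR (S j)) by (apply Rle_div_r; lra).
  nra.
Qed.

Lemma pow_div_fact_le n j k : (j <= k)%nat -> (k <= n)%nat ->
  INR n ^ j / INR (fact j) <= INR n ^ k / INR (fact k).
Proof.
  induction 1 as [|k Hjk IH]; intros Hk; [lra|].
  eapply Rle_trans; [apply IH; lia|]. apply pow_div_fact_le_succ, Hk.
Qed.

Lemma binsum_le_mul_pow_div_fact n k : (k <= n)%nat ->
  binsum n k <= INR k * (INR n ^ k / INR (fact k)).
Proof.
  induction k as [|k IHk]; intros Hk.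
  - unfold binsum. simpl. lra.
  - rewrite binsum_S, S_INR.
    assert (H1 := IHk ltac:(lia)).
    assert (H2 := C_le_pow_div_fact n (S k) Hk).
    assert (H3 := pow_div_fact_le n k (S k) ltac:(lia) Hk).
    apply Rmult_le_compat_l with (r := INR k) in H3; [lra|apply pos_INR].
Qed.

Lemma succ_pow_le k : (INR k + 1) ^ k <= 3 * INR k ^ k.
Proof.
  destruct k as [|k]; [simpl; lra|].
  set (x := INR (S k)).
  assert (Hx : 0 < x) by (apply lt_0_INR; lia).
  replace (x + 1) with (x * (1 + / x)) by (field; lra).
  rewrite Rpow_mult_distr.
  assert (He : (1 + / x) ^ S k <= exp 1).
  { replace (exp 1) with (exp (/ x) ^ S k).
    - apply pow_incr. split; [|apply exp_ineq1_le].
      assert (0 < / x) by (apply Rinv_0_lt_compat; lra). lra.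
    - rewrite <- Rpower_pow by apply exp_pos. unfold Rpower. rewrite ln_exp.
      f_equal. fold x. field. lra. }
  assert (H3 := exp_le_3).
  assert (0 <= x ^ S k) by (apply pow_le; lra).
  nra.
Qed.

Lemma pow_self_le_fact k : INR k ^ k <= 3 ^ k * INR (fact k).
Proof.
  induction k as [|k IHk]; [simpl; lra|].
  change (fact (S k)) with (S k * fact k)%nat.
  rewrite mult_INR, S_INR. simpl.
  assert (H := succ_pow_le k).
  assert (0 <= INR k) by apply pos_INR.
  nra.
Qed.

Lemma INR_le_pow2 k : INR k <= 2 ^ k.
Proof.
  induction k as [|k IHk]; [simpl; lra|].
  rewrite S_INR. simpl. assert (1 <= 2 ^ k) by (apply pow_R1_Rle; lra). lra.
Qed.

Lemma binsum_le_pow n k : (1 <= k)%nat -> (k <= n)%nat ->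
  binsum n k <= (6 * INR n / INR k) ^ k.
Proof.
  intros Hk1 Hkn.
  eapply Rle_trans; [apply binsum_le_mul_pow_div_fact, Hkn|].
  assert (Hk : 0 < INR k) by (apply lt_0_INR; lia).
  assert (Hkk : 0 < INR k ^ k) by (apply pow_lt; lra).
  assert (Hf := INR_fact_lt_0 k).
  assert (Hn : 0 <= INR n ^ k) by (apply pow_le, pos_INR).
  assert (Hfact : / INR (fact k) <= 3 ^ k / INR k ^ k).
  { apply Rmult_le_reg_r with (INR (fact k) * INR k ^ k); [nra|].
    field_simplify; [|lra|lra]. rewrite Rmult_comm. apply pow_self_le_fact. }
  replace ((6 * INR n / INR k) ^ k) with (2 ^ k * (INR n ^ k * (3 ^ k / INR k ^ k))).
  - unfold Rdiv at 1. apply Rmult_le_compat; [apply pos_INR| |apply INR_le_pow2|].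
    + apply Rmult_le_pos; [lra|left; apply Rinv_0_lt_compat, Hf].
    + apply Rmult_le_compat_l; assumption.
  - replace 6 with (2 * 3) by ring. unfold Rdiv. rewrite !Rpow_mult_distr, pow_inv. field. lra.
Qed.

Lemma exp_le_exp x y : x <= y -> exp x <= exp y.
Proof. intros [Hxy| ->]; [left; apply exp_increasing|]; lra. Qed.

Lemma binsum_ceil_le_exp n K : 0 < K -> K + 1 <= INR n ->
  exists k, K <= INR k /\ (k <= n)%nat /\
    binsum n k <= exp ((K + 1) * ln (6 * INR n / K)).
Proof.
  intros HK HKn.
  destruct (archimed K) as [Hup1 Hup2].
  assert (Hup0 : (0 < up K)%Z) by (apply lt_0_IZR; lra).
  exists (Z.to_nat (up K)).
  assert (Hk : INR (Z.to_nat (up K)) = IZR (up K))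
    by (rewrite INR_IZR_INZ, Z2Nat.id; [reflexivity|lia]).
  set (k := Z.to_nat (up K)) in *.
  assert (Hkn : (k <= n)%nat) by (apply INR_le; lra).
  repeat split; [lra|exact Hkn|].
  assert (Hlog : ln (6 * INR n / INR k) <= ln (6 * INR n / K)).
  { apply ln_le; [apply Rdiv_lt_0_compat; lra|].
    apply Rmult_le_compat_l; [lra|]. apply Rinv_le_contravar; lra. }
  assert (Hlog0 : 0 <= ln (6 * INR n / K)).
  { rewrite <- ln_1. apply ln_le; [lra|]. apply Rle_div_r; lra. }
  eapply Rle_trans; [apply binsum_le_pow; [lia|exact Hkn]|].
  rewrite <- Rpower_pow by (apply Rdiv_lt_0_compat; lra).
  apply exp_le_exp.
  apply Rle_trans with (INR k * ln (6 * INR n / K)).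
  - apply Rmult_le_compat_l; [apply pos_INR|exact Hlog].
  - apply Rmult_le_compat_r; lra.
Qed.

Lemma sq_div4_le_exp u : 0 <= u -> u * u / 4 <= exp u.
Proof.
  intros Hu. replace u with (u / 2 + u / 2) at 3 by field.
  rewrite exp_plus. assert (H := exp_ineq1_le (u / 2)). nra.
Qed.

Lemma eventually_ge M : Rbar_locally p_infty (fun x => M <= x).
Proof. exists M. intros x Hx. lra. Qed.

Lemma eventually_affine_le_sq a b e : 0 < e ->
  Rbar_locally p_infty (fun s => a * s + b <= e * (s * s)).
Proof.
  intros He. exists (1 + (Rabs a + Rabs b) / e). intros s Hs.
  assert (Ha := Rle_abs a). assert (Hb := Rle_abs b).
  assert (Ha0 := Rabs_pos a). assert (Hb0 := Rabs_pos b).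
  assert (Hab : Rabs a + Rabs b <= e * s).
  { assert (Hs1 : (Rabs a + Rabs b) / e <= s - 1) by lra.
    apply Rmult_le_compat_l with (r := e) in Hs1; [|lra].
    replace (e * ((Rabs a + Rabs b) / e)) with (Rabs a + Rabs b) in Hs1 by (field; lra).
    lra. }
  assert (Hs1 : 1 <= s).
  { assert (0 <= (Rabs a + Rabs b) / e) by (apply Rdiv_le_0_compat; lra). lra. }
  apply Rmult_le_compat_r with (r := s) in Hab; [nra|lra].
Qed.

Lemma eventually_affine_ln_le a b e : 0 < e ->
  Rbar_locally p_infty (fun L => a * ln L + b <= e * L).
Proof.
  intros He.
  assert (Hu : Rbar_locally p_infty (fun u => a * u + b <= e / 4 * (u * u) /\ 0 <= u))
    by (apply filter_and; [apply eventually_affine_le_sq; lra|apply eventually_ge]).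
  apply (filter_imp (fun L => (a * ln L + b <= e / 4 * (ln L * ln L) /\ 0 <= ln L) /\ 0 < L)).
  - intros L [[Hab Hln] HL].
    assert (Hexp := sq_div4_le_exp (ln L) Hln). rewrite exp_ln in Hexp by exact HL.
    apply Rmult_le_compat_l with (r := e) in Hexp; lra.
  - apply filter_and; [exact (is_lim_ln_p _ Hu)|].
    exists 0. intros L HL. exact HL.
Qed.

Lemma eventually_affine_le_exp a b e be : 0 < e -> 0 < be ->
  Rbar_locally p_infty (fun L => a * L + b <= e * exp (be * L)).
Proof.
  intros He Hbe.
  apply (filter_imp (fun L => a * L + b <= e / 4 * ((be * L) * (be * L)) /\ 0 <= L)).
  - intros L [Hab HL]. assert (Hexp := sq_div4_le_exp (be * L) ltac:(nra)).
    apply Rmult_le_compat_l with (r := e) in Hexp; lra.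
  - apply filter_and; [|apply eventually_ge].
    apply (filter_imp (fun L => a * L + b <= e * be * be / 4 * (L * L))).
    + intros L H. lra.
    + apply eventually_affine_le_sq. assert (0 < be * be) by nra. nra.
Qed.

Lemma ratio_succ_le_exp A be L : 0 < A -> 0 < be < 1 -> 1 <= L -> A / (1 - be) <= L ->
  A * exp (be * L) / L + 1 <= exp L.
Proof.
  intros HA Hbe HL HAL.
  set (t := exp (be * L)).
  assert (Ht : 1 <= t) by (assert (H := exp_ineq1_le (be * L)); unfold t; nra).
  assert (Hdiv : A * t / L <= A * t).
  { apply Rle_div_l; [lra|]. assert (0 < A * t) by nra. nra. }
  assert (HAL' : A <= (1 - be) * L).
  { apply Rmult_le_compat_r with (r := 1 - be) in HAL; [|lra].
    replace (A / (1 - be) * (1 - be)) with A in HAL by (field; lra). lra. }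
  replace (exp L) with (t * exp ((1 - be) * L)) by (unfold t; rewrite <- exp_plus; f_equal; ring).
  assert (H := exp_ineq1_le ((1 - be) * L)).
  nra.
Qed.

Lemma succ_mul_ln_ratio_le A be de L : 0 < A -> 0 < be < 1 -> 0 < L ->
  A * ln L + A * (ln 6 - ln A) <= de / 2 * L ->
  2 * L + Rabs (ln 6 - ln A) <= de / 2 * exp (be * L) ->
  (A * exp (be * L) / L + 1) * ln (6 * exp L / (A * exp (be * L) / L))
    <= (A * (1 - be) + de) * exp (be * L).
Proof.
  intros HA Hbe HL Hsmall Hlarge.
  set (t := exp (be * L)) in *. set (B := ln 6 - ln A) in *.
  assert (Ht : 0 < t) by apply exp_pos.
  assert (HK : 0 < A * t / L) by (apply Rdiv_lt_0_compat; nra).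
  assert (Hln : ln (6 * exp L / (A * t / L)) = (1 - be) * L + (ln L + B)).
  { replace (6 * exp L / (A * t / L)) with (6 * exp L * L / (A * t)) by (field; lra).
    assert (Hx := exp_pos L).
    rewrite ln_div, !ln_mult, ln_exp by nra.
    unfold t, B. rewrite ln_exp. ring. }
  assert (HlnL : ln L <= L).
  { assert (H := exp_ineq1_le (ln L)). rewrite exp_ln in H; lra. }
  assert (HKsmall : A * t / L * (ln L + B) <= de / 2 * t).
  { replace (A * t / L * (ln L + B)) with (t / L * (A * ln L + A * B)) by (field; lra).
    replace (de / 2 * t) with (t / L * (de / 2 * L)) by (field; lra).
    apply Rmult_le_compat_l; [apply Rdiv_le_0_compat|]; lra. }
  assert (HB := Rle_abs B).
  rewrite Hln.
  replace ((A * t / L + 1) * ((1 - be) * L + (ln L + B)))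
    with (A * (1 - be) * t + A * t / L * (ln L + B) + ((1 - be) * L + (ln L + B)))
    by (field; lra).
  nra.
Qed.

Lemma eventually_ratio_exponent_le A be de : 0 < A -> 0 < be < 1 -> 0 < de ->
  Rbar_locally p_infty (fun x =>
    let K := A * Rpower x be / ln x in
    K + 1 <= x /\ (K + 1) * ln (6 * x / K) <= (A * (1 - be) + de) * Rpower x be).
Proof.
  intros HA Hbe Hde.
  set (B := ln 6 - ln A).
  assert (HL : Rbar_locally p_infty (fun L =>
    ((1 <= L /\ A / (1 - be) <= L) /\ A * ln L + A * B <= de / 2 * L) /\
    2 * L + Rabs B <= de / 2 * exp (be * L))).
  { repeat apply filter_and; try apply eventually_ge.
    - apply eventually_affine_ln_le. lra.
    - apply eventually_affine_le_exp; lra. }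
  apply (filter_imp (fun x =>
    (((1 <= ln x /\ A / (1 - be) <= ln x) /\ A * ln (ln x) + A * B <= de / 2 * ln x) /\
     2 * ln x + Rabs B <= de / 2 * exp (be * ln x)) /\ 0 < x)).
  - intros x [[[[HL1 HLA] Hsmall] Hlarge] Hx]. cbv zeta. unfold Rpower.
    assert (Hxe : x = exp (ln x)) by (rewrite exp_ln; lra).
    set (L := ln x) in *. rewrite Hxe.
    split.
    + apply ratio_succ_le_exp; assumption.
    + apply succ_mul_ln_ratio_le; (assumption || lra).
  - apply filter_and; [exact (is_lim_ln_p _ HL)|].
    exists 0. intros x Hx. exact Hx.
Qed.

Lemma Rpower2_le_Rpower2_plus_pred m c : 0 <= m -> 1 <= c -> Rpower 2 m <= Rpower 2 (m + c) - 1.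
Proof.
  intros Hm Hc. rewrite Rpower_plus.
  assert (H1 : 1 <= Rpower 2 m) by (rewrite <- (Rpower_O 2) by lra; apply Rle_Rpower; lra).
  assert (H2 : 2 <= Rpower 2 c) by (rewrite <- (Rpower_1 2) at 1 by lra; apply Rle_Rpower; lra).
  nra.
Qed.

Lemma le_wstar_of_exponent_le n K m c : 0 < K -> K + 1 <= INR n ->
  (K + 1) * ln (6 * INR n / K) <= m * ln 2 -> 0 <= m -> 1 <= c ->
  K <= INR (wstar n (Rpower 2 (m + c))).
Proof.
  intros HK HKn Hexp Hm Hc.
  destruct (binsum_ceil_le_exp n K HK HKn) as (k & HKk & Hkn & Hbin).
  apply Rle_trans with (INR k); [exact HKk|].
  apply le_INR, le_wmax; [exact Hkn|].
  eapply Rle_trans; [exact Hbin|]. eapply Rle_trans; [apply exp_le_exp, Hexp|].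
  apply Rpower2_le_Rpower2_plus_pred; assumption.
Qed.

Lemma nonpos_div_log2_le_INR lambda m x w : lambda <= 0 -> 0 <= m -> 1 < x ->
  lambda * m / log2 x <= INR w.
Proof.
  intros Hl Hm Hx.
  assert (Hlog : 0 < / log2 x).
  { apply Rinv_0_lt_compat, Rdiv_lt_0_compat; [|assert (H := ln_lt_2); lra].
    rewrite <- ln_1. apply ln_increasing; lra. }
  assert (H := pos_INR w).
  unfold Rdiv. assert (lambda * m <= 0) by nra. nra.
Qed.

Theorem corollary2 (alpha beta c : R) :
  0 < alpha < 1 -> 0 < beta < 1 -> 2 <= c ->
  forall lambda : R, lambda < 1 / (1 - beta) ->
  exists N : R, 0 < N /\
    forall n : nat, N < INR n ->
      let m := alpha * Rpower (INR n) beta in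
      lambda * m / log2 (INR n) <= INR (wstar n (Rpower 2 (m + c))).
Proof.
  intros Ha Hb Hc lambda Hl.
  assert (Hm : forall x, 0 <= alpha * Rpower x beta)
    by (intros x; assert (H := exp_pos (beta * ln x)); unfold Rpower; nra).
  destruct (Rle_lt_dec lambda 0) as [Hl0|Hl0].
  { exists 1. split; [lra|]. intros n Hn m. apply nonpos_div_log2_le_INR; [exact Hl0|apply Hm|lra]. }
  assert (Hln2 := ln_lt_2).
  set (A := lambda * alpha * ln 2).
  set (de := alpha * ln 2 - A * (1 - beta)).
  assert (HA : 0 < A) by (unfold A; repeat apply Rmult_lt_0_compat; lra).
  assert (Hde : 0 < de).
  { replace de with (alpha * ln 2 * (1 - lambda * (1 - beta))) by (unfold de, A; ring).
    assert (lambda * (1 - beta) < 1) by (apply Rlt_div_r in Hl; lra).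
    apply Rmult_lt_0_compat; nra. }
  destruct (eventually_ratio_exponent_le A beta de HA Hb Hde) as [M HM].
  exists (Rmax 1 M). split; [eapply Rlt_le_trans; [|apply Rmax_l]; lra|].
  intros n Hn m.
  assert (Hn1 : 1 < INR n) by (eapply Rle_lt_trans; [apply Rmax_l|exact Hn]).
  destruct (HM (INR n) ltac:(eapply Rle_lt_trans; [apply Rmax_r|exact Hn])) as [HKn Hexp].
  assert (HlnN : 0 < ln (INR n)) by (rewrite <- ln_1; apply ln_increasing; lra).
  replace (lambda * m / log2 (INR n)) with (A * Rpower (INR n) beta / ln (INR n))
    by (unfold m, A, log2; field; lra).
  apply le_wstar_of_exponent_le; [| exact HKn | | apply Hm | lra].
  - apply Rdiv_lt_0_compat; [apply Rmult_lt_0_compat; [lra|apply exp_pos]|lra].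
  - replace (m * ln 2) with ((A * (1 - beta) + de) * Rpower (INR n) beta) by (unfold de, m; ring).
    exact Hexp.
Qed.
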